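(* Let $(R,\mathfrak{m})$ be a Noetherian local ring and let $I$ be an ideal of $R$. Let $x_1,\ldots,x_s,y$ be a minimal generating set of $I$ and $J=(x_1,\ldots,x_s)$. Assume that $x_1,\ldots,x_s$ is an $R$-sequence and that the initial forms $x_1^*,\ldots,x_{s-1}^*$ form a $\mathbf{G}(I)$-sequence. Then, for each $n\geq 2$, every $F\in Q_n$ satisfies $F(0,\ldots,0,1)\in (JI^{n-1}:y^n)$, and the map $F\mapsto F(0,\ldots,0,1)$ induces an isomorphism of $R$-modules $$\left[\frac{Q}{Q\langle n-1\rangle}\right]_n\cong \frac{JI^{n-1}:y^{n}}{JI^{n-2}:y^{n-1}}.$$ In particular, if $J$ is a reduction of $I$ with reduction number $r=\mathrm{r}_J(I)$, then $\mathrm{rt}(I)=\mathrm{r}_J(I)+1$ and there is a form $Y^{r+1}-\sum_{i=1}^s X_iF_i\in Q_{r+1}$, with $F_i\in V_r$, such that $Q=(Y^{r+1}-\sum_i X_iF_i)+Q\langle r\rangle$.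
   Context: $\mathbf{R}(I)=R[It]=\bigoplus_{n\geq0}I^nt^n$ is the Rees algebra and $\mathbf{G}(I)=\bigoplus_{n\geq 0}I^n/I^{n+1}$ the associated graded ring; $x_i^*$ denotes the class of $x_i$ in $I/I^2$. $V=R[X_1,\ldots,X_s,Y]$ is a polynomial ring graded by total degree in the variables, $V_n$ its degree-$n$ component, and $\varphi:V\to\mathbf{R}(I)$ is the graded $R$-algebra map with $X_i\mapsto x_it$, $Y\mapsto yt$. $Q=\ker\varphi=\bigoplus_{n\geq1}Q_n$ (the equations of $\mathbf{R}(I)$), and for $n\geq1$, $Q\langle n\rangle$ is the ideal of $V$ generated by the homogeneous elements of $Q$ of degree at most $n$; $[Q/Q\langle n-1\rangle]_n$ denotes the degree-$n$ component. Convention $I^0=R$. The relation type $\mathrm{rt}(I)$ is the least $N\geq1$ with $Q=Q\langle N\rangle$. $J\subseteq I$ is a reduction of $I$ if $I^{m+1}=JI^m$ for some $m\geq 0$, and the reduction number $\mathrm{r}_J(I)$ is the least such $m$. *)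

From HB Require Import structures.
From mathcomp Require Import all_boot all_order all_algebra.
From mathcomp Require Import mpoly.
Set Implicit Arguments. Unset Strict Implicit. Unset Printing Implicit Defensive.
Import Order.TTheory GRing.Theory.
Local Open Scope ring_scope.

Section Defs.
Variable R : comNzRingType.

Definition is_ideal (A : R -> Prop) : Prop :=
  A 0 /\ (forall a b, A a -> A b -> A (a + b)) /\ (forall r a, A a -> A (r * a)).

Definition ideal_gen_on k (S : {set 'I_k}) (g : 'I_k -> R) : R -> Prop :=
  fun r => exists c : 'I_k -> R,
    (forall i, i \notin S -> c i = 0) /\ r = \sum_(i < k) c i * g i.

Definition ideal_gen k (g : 'I_k -> R) : R -> Prop := ideal_gen_on setT g.

Definition same_set (A B : R -> Prop) : Prop := forall r, A r <-> B r.

Definition idealM (A B : R -> Prop) : R -> Prop :=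
  fun r => exists k (a b : 'I_k -> R),
    (forall i, A (a i)) /\ (forall i, B (b i)) /\ r = \sum_(i < k) a i * b i.

(** powers, with the convention I^0 = R *)
Definition idealX (A : R -> Prop) (n : nat) : R -> Prop :=
  iter n (idealM A) (fun _ => True).

Definition colon (A : R -> Prop) (a : R) : R -> Prop := fun r => A (r * a).

Definition noetherian : Prop :=
  forall A, is_ideal A -> exists k (g : 'I_k -> R), same_set A (ideal_gen g).

Definition maximal_ideal (M : R -> Prop) : Prop :=
  is_ideal M /\ ~ M 1 /\
  forall A, is_ideal A -> (forall r, M r -> A r) -> ~ A 1 -> same_set A M.

Definition local_ring : Prop :=
  exists M, maximal_ideal M /\ forall M', maximal_ideal M' -> same_set M' M.

Definition minimal_generating k (g : 'I_k -> R) (I : R -> Prop) : Prop :=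
  same_set I (ideal_gen g) /\
  forall S : {set 'I_k}, S \proper setT -> ~ same_set I (ideal_gen_on S g).

Definition regular_seq k (x : 'I_k -> R) : Prop :=
  (forall i : 'I_k, forall r,
     ideal_gen_on [set j : 'I_k | (j < i)%N] x (r * x i) ->
     ideal_gen_on [set j : 'I_k | (j < i)%N] x r) /\
  ~ ideal_gen x 1.

(** ---- The associated graded ring G(I) = (+)_n I^n/I^(n+1) ----
    An element is represented by a finitely supported family (g n)_n with
    g n in I^n (g n represents the degree n component in I^n/I^(n+1)). *)
Definition Gelt (I : R -> Prop) (g : nat -> R) : Prop :=
  (forall n, idealX I n (g n)) /\ exists N, forall n, (N <= n)%N -> g n = 0.

Definition Geq (I : R -> Prop) (g h : nat -> R) : Prop :=
  forall n, idealX I n.+1 (g n - h n).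

Definition Gmul (g h : nat -> R) : nat -> R :=
  fun n => \sum_(i < n.+1) g i * h (n - i)%N.

Definition Gone : nat -> R := fun n => if n == 0%N then 1 else 0.

Definition initial_form (x : R) : nat -> R := fun n => if n == 1%N then x else 0.

Definition G_in_ideal (I : R -> Prop) k (x : 'I_k -> R) (i : nat) (g : nat -> R) : Prop :=
  exists c : 'I_k -> nat -> R, (forall j, Gelt I (c j)) /\
    Geq I g (fun n => \sum_(j < k | (j < i)%N) Gmul (initial_form (x j)) (c j) n).

Definition G_regular_seq (I : R -> Prop) k (x : 'I_k -> R) (m : nat) : Prop :=
  (forall i : 'I_k, (i < m)%N -> forall g, Gelt I g ->
     G_in_ideal I x i (Gmul (initial_form (x i)) g) -> G_in_ideal I x i g) /\
  ~ G_in_ideal I x m Gone.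

Definition reduction_at (J I : R -> Prop) (m : nat) : Prop :=
  same_set (idealX I m.+1) (idealM J (idealX I m)).

Definition reduction_number (J I : R -> Prop) (r : nat) : Prop :=
  (forall a, J a -> I a) /\ reduction_at J I r /\
  forall m, (m < r)%N -> ~ reduction_at J I m.

End Defs.

(** ---- The polynomial ring V = R[X_1,...,X_s,Y] and the equations Q ----
    V = {mpoly R[s.+1]}; X_i = 'X_(lift ord_max i), Y = 'X_ord_max. *)
Section Rees.
Variables (R : comNzRingType) (s : nat).
Local Notation V := {mpoly R[s.+1]}.

Definition Xv (i : 'I_s) : V := 'X_(lift ord_max i).
Definition Yv : V := 'X_(@ord_max s).

Definition gens (x : 'I_s -> R) (y : R) : 'I_s.+1 -> R :=
  fun j => if unlift ord_max j is Some i then x i else y.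

(** phi : V -> R[It] subset R[t],  X_i |-> x_i t,  Y |-> y t *)
Definition phi (x : 'I_s -> R) (y : R) (F : V) : {poly R} :=
  mmap (@polyC R) (fun j => (gens x y j)%:P * 'X) F.

Definition inQ x y (F : V) : Prop := phi x y F = 0.

Definition inQn x y (n : nat) (F : V) : Prop := F \is n.-homog /\ inQ x y F.

Definition inQgen x y (n : nat) (F : V) : Prop :=
  exists k (G H : 'I_k -> V),
    (forall i, exists d, (d <= n)%N /\ inQn x y d (G i)) /\
    F = \sum_(i < k) H i * G i.

Definition Q_eq_gen x y (N : nat) : Prop := forall F : V, inQ x y F <-> inQgen x y N F.

Definition relation_type x y (N : nat) : Prop :=
  (1 <= N)%N /\ Q_eq_gen x y N /\ forall M, (1 <= M < N)%N -> ~ Q_eq_gen x y M.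

Definition evalY1 (F : V) : R := F.@[fun j => if j == ord_max then 1 else 0].

End Rees.

(* I^n is the set of values F(x, y) of the forms F of degree n, and a form of
   degree n decomposes as sum_i X_i F_i + F(0,...,0,1) Y^n.  Hence an equation
   F in Q_n gives F(0,...,0,1) y^n in J I^(n-1), and conversely any c with
   c y^n = sum_i x_i b_i lifts to the equation c Y^n - sum_i X_i B_i.  An
   equation with F(0,...,0,1) = 0 is a syzygy sum_i x_i K_i(x, y) = 0 of the
   regular sequence x with coefficients in I^(n-1).  Since x_1^*, ..., x_(s-1)^*
   is G(I)-regular, (x_1, ..., x_t) meets I^(k+1) in (x_1, ..., x_t) I^k; so the
   last coefficient K_t is sum_(i < t) X_i B_i modulo an equation of degree n-1,
   and moving X_t X_i B_i into the i-th coordinate shortens the syzygy.  Thus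
   such equations lie in Q<n-1>.  When J is a reduction with number r, y^(r+1)
   lies in J I^r, so no new equations appear beyond degree r + 1, where the lift
   of 1 generates modulo Q<r>. *)

From HB Require Import structures.
From mathcomp Require Import all_boot all_order all_algebra.
From mathcomp Require Import mpoly.
From mathcomp Require Import zify.
Import Order.TTheory GRing.Theory.
Set Implicit Arguments. Unset Strict Implicit. Unset Printing Implicit Defensive.
Local Open Scope ring_scope.

Lemma mmap_homog (R : comNzRingType) k n (v : 'I_k -> R) (F : {mpoly R[k]}) :
  F \is n.-homog -> mmap (@polyC R) (fun j => (v j)%:P * 'X) F = (F.@[v])%:P * 'X^n.
Proof.
move=> hF; rewrite /mmap mevalE rmorph_sum mulr_suml big_seq [RHS]big_seq.
apply: eq_bigr => m hm; have dm : mdeg m = n := dhomog_mf hF hm.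
have -> : ('X^n : {poly R}) = \prod_(i < k) 'X ^+ m i.
  by rewrite -(big_morph (GRing.exp ('X : {poly R})) (exprD _) (expr0 _)) -mdegE dm.
rewrite /mmap1 (eq_bigr (fun i => (v i ^+ m i)%:P * 'X ^+ m i)); last first.
  by move=> i _; rewrite exprMn rmorphXn.
by rewrite big_split /= rmorphM rmorph_prod /= mulrA.
Qed.

Lemma homog0_meval (R : comNzRingType) k (F : {mpoly R[k]}) v :
  F \is 0.-homog -> F.@[v] = F@_0.
Proof.
move=> hF; have -> : F = (F@_0)%:MP.
  apply/mpolyP => m; rewrite mcoeffC; case: eqP => [->|/eqP hm]; first by rewrite mulr1.
  by rewrite mulr0; apply: (dhomog_nemf_coeff hF); rewrite /= mdeg_eq0.
by rewrite mevalC mcoeffC eqxx mulr1.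
Qed.

Lemma big_ord_lift_max (T : nmodType) k (f : 'I_k.+1 -> T) :
  \sum_j f j = \sum_(i < k) f (lift ord_max i) + f ord_max.
Proof.
rewrite big_ord_recr /=; congr (_ + _); apply: eq_bigr => i _.
by congr f; apply: val_inj; rewrite /= /bump leqNgt ltn_ord.
Qed.

Lemma big_ord_ltS (T : nmodType) k (t : 'I_k) (f : 'I_k -> T) :
  \sum_(i < k | (i < t.+1)%N) f i = \sum_(i < k | (i < t)%N) f i + f t.
Proof.
rewrite (bigD1 t) /= ?ltnSn // addrC; congr (_ + _); apply: eq_bigl => i.
by rewrite ltnS -val_eqE /= [RHS]ltn_neqAle andbC.
Qed.

Lemma big_ltS_koszul (T : comPzRingType) k (t : 'I_k) (X K B : 'I_k -> T) :
  \sum_(i < k | (i < t.+1)%N) X i * K i =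
  \sum_(i < k | (i < t)%N) X i * (K i + X t * B i) +
    X t * (K t - \sum_(j < k | (j < t)%N) X j * B j).
Proof.
rewrite big_ord_ltS; under [in RHS]eq_bigr do rewrite mulrDr mulrCA.
by rewrite big_split /= -mulr_sumr mulrBr addrACA subrr addr0.
Qed.

Lemma Gmul_initial_formE (R : comNzRingType) (z : R) (h : nat -> R) m :
  Gmul (initial_form z) h m = if m is m'.+1 then z * h m' else 0.
Proof.
case: m => [|m]; rewrite /Gmul; first by rewrite big_ord1 /initial_form /= mul0r.
rewrite (bigD1 (Ordinal (isT : (1 < m.+2)%N))) //= big1 ?addr0; first by rewrite subn1.
move=> i hi; rewrite /initial_form; case: eqP => [e|]; last by rewrite mul0r.
by case/eqP: hi; apply: val_inj.
Qed.

Section Rees.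
Variables (R : comNzRingType) (s : nat) (x : 'I_s -> R) (y : R).
Local Notation V := {mpoly R[s.+1]}.
Local Notation g := (gens x y).
Local Notation X := (@Xv R s).
Local Notation Y := (Yv R s).

Lemma gens_lift (i : 'I_s) : g (lift ord_max i) = x i.
Proof. by rewrite /gens liftK. Qed.

Lemma gens_max : g ord_max = y.
Proof. by rewrite /gens unlift_none. Qed.

Lemma meval_Xv (i : 'I_s) : (X i).@[g] = x i.
Proof. by rewrite mevalXU gens_lift. Qed.

Lemma meval_Yv : Y.@[g] = y.
Proof. by rewrite mevalXU gens_max. Qed.

Lemma evalY1_Xv (i : 'I_s) : evalY1 (X i) = 0.
Proof. by rewrite /evalY1 mevalXU eq_sym (negbTE (neq_lift _ _)). Qed.

Lemma evalY1_Yv : evalY1 Y = 1.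
Proof. by rewrite /evalY1 mevalXU eqxx. Qed.

Lemma Xv_homog (i : 'I_s) : X i \is 1.-homog.
Proof. by rewrite dhomogX /= mdeg1. Qed.

Lemma Yv_homog : Y \is 1.-homog.
Proof. by rewrite dhomogX /= mdeg1. Qed.

Lemma Xv_mul_homog n (F : V) i : F \is n.-homog -> X i * F \is n.+1.-homog.
Proof. by move=> hF; have := dhomogM (Xv_homog i) hF; rewrite add1n. Qed.

Lemma sum_Xv_mul_homog n (Fs : 'I_s -> V) (P : pred 'I_s) :
  (forall i, Fs i \is n.-homog) -> \sum_(i | P i) X i * Fs i \is n.+1.-homog.
Proof.
move=> hFs; apply: (big_ind (fun F : V => F \is n.+1.-homog)); first exact: dhomog0.
  by move=> ? ?; apply: dhomogD.
by move=> i _; apply: Xv_mul_homog.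
Qed.

Lemma monomial_decompY n (m : 'X_{1..s.+1}) : mdeg m = n.+1 ->
  exists Fs : 'I_s -> V, (forall i, Fs i \is n.-homog) /\
    'X_[m] = \sum_i X i * Fs i + evalY1 'X_[m] *: Y ^+ n.+1.
Proof.
move=> dm; case: (boolP [exists i : 'I_s, (0 < m (lift ord_max i))%N]).
- case/existsP => i hi; set j := lift ord_max i.
  have em : m = (m - U_(j) + U_(j))%MM.
    by rewrite submK //; apply/mnm_lepP => k; rewrite mnm1E; case: eqP => // <-.
  have dm' : mdeg (m - U_(j))%MM = n.
    by move: dm; rewrite {1}em mdegD mdeg1 addn1 => -[].
  exists (fun k => if k == i then 'X_[m - U_(j)] else 0); split.
    by move=> k; case: eqP => _; [rewrite dhomogX /= dm' | exact: dhomog0].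
  rewrite (bigD1 i) //= eqxx big1 ?addr0; last by move=> k /negbTE ->; rewrite mulr0.
  have e0 : evalY1 ('X_[m] : V) = 0.
    by rewrite em mpolyXD /evalY1 mevalM -/(evalY1 (X i)) evalY1_Xv mulr0.
  by rewrite e0 scale0r addr0 {1}em mpolyXD mulrC.
- rewrite negb_exists => /forallP h0.
  have em : m = (U_(ord_max) *+ n.+1)%MM.
    apply/mnmP => j; rewrite mulmnE mnm1E.
    case: (unliftP ord_max j) => [i ->|->].
      by move: (h0 i); rewrite lt0n negbK (negbTE (neq_lift _ _)) => /eqP.
    rewrite eqxx mul1n -dm mdegE big_ord_lift_max big1 ?add0n // => i _.
    by move: (h0 i); rewrite lt0n negbK => /eqP.
  exists (fun _ => 0); split=> [i|]; first exact: dhomog0.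
  rewrite big1 ?add0r; last by move=> i _; rewrite mulr0.
  by rewrite em -mpolyXn /evalY1 rmorphXn /= -/(evalY1 Y) evalY1_Yv expr1n scale1r.
Qed.

Lemma homog_decompY n (F : V) : F \is n.+1.-homog ->
  exists Fs : 'I_s -> V, (forall i, Fs i \is n.-homog) /\
    F = \sum_i X i * Fs i + evalY1 F *: Y ^+ n.+1.
Proof.
pose decomp (G : V) := exists Fs : 'I_s -> V, (forall i, Fs i \is n.-homog) /\
  G = \sum_i X i * Fs i + evalY1 G *: Y ^+ n.+1.
move=> hF; suff : decomp F by []; rewrite (mpolyE F) big_seq; apply: big_ind.
- exists (fun _ => 0); split=> [i|]; first exact: dhomog0.
  by rewrite big1 ?add0r /evalY1 ?meval0 ?scale0r // => i _; rewrite mulr0.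
- move=> G1 G2 [F1 [h1 e1]] [F2 [h2 e2]]; exists (fun i => F1 i + F2 i); split.
    by move=> i; apply: dhomogD.
  rewrite /evalY1 mevalD -!/(evalY1 _) scalerDl.
  under eq_bigr do rewrite mulrDr.
  by rewrite big_split /= {1}e1 {1}e2 addrACA.
move=> m hm; have [Fs [hFs eF]] := monomial_decompY (dhomog_mf hF hm).
exists (fun i => F@_m *: Fs i); split=> [i|]; first exact: dhomogZ.
rewrite /evalY1 mevalZ -/(evalY1 _) -scalerA {1}eF scalerDr scaler_sumr.
by congr (_ + _); apply: eq_bigr => i _; rewrite scalerAr.
Qed.

(* I^n is handled as the set of values at (x, y) of the forms of degree n;
   idealX_Ipow identifies it with the power of the ideal I. *)
Definition Ipow n (a : R) := exists F : V, F \is n.-homog /\ F.@[g] = a.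

Definition JIpow n (a : R) :=
  exists b : 'I_s -> R, (forall i, Ipow n (b i)) /\ a = \sum_i x i * b i.

Lemma Ipow0 n : Ipow n 0.
Proof. by exists 0; rewrite dhomog0 meval0. Qed.

Lemma IpowD n a b : Ipow n a -> Ipow n b -> Ipow n (a + b).
Proof. by move=> [F [hF <-]] [G [hG <-]]; exists (F + G); rewrite dhomogD // mevalD. Qed.

Lemma IpowMl n c a : Ipow n a -> Ipow n (c * a).
Proof. by move=> [F [hF <-]]; exists (c *: F); rewrite dhomogZ // mevalZ. Qed.

Lemma IpowN n a : Ipow n a -> Ipow n (- a).
Proof. by move=> h; rewrite -mulN1r; apply: IpowMl. Qed.

Lemma IpowB n a b : Ipow n a -> Ipow n b -> Ipow n (a - b).
Proof. by move=> ha hb; apply: IpowD => //; apply: IpowN. Qed.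

Lemma IpowM n m a b : Ipow n a -> Ipow m b -> Ipow (n + m) (a * b).
Proof. by move=> [F [hF <-]] [G [hG <-]]; exists (F * G); rewrite dhomogM // mevalM. Qed.

Lemma Ipow_sum n (T : Type) (r : seq T) (P : pred T) (f : T -> R) :
  (forall i, P i -> Ipow n (f i)) -> Ipow n (\sum_(i <- r | P i) f i).
Proof. by move=> h; apply: big_ind => //; [exact: Ipow0 | exact: IpowD]. Qed.

Lemma Ipow_deg0 a : Ipow 0 a.
Proof. by exists a%:MP; rewrite mevalC -[a%:MP]mulr1 mul_mpolyC dhomogZ // dhomog1. Qed.

Lemma Ipow_gens j : Ipow 1 (g j).
Proof. by exists 'X_j; rewrite mevalXU dhomogX /= mdeg1. Qed.

Lemma Ipow_x i : Ipow 1 (x i).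
Proof. by rewrite -gens_lift; exact: Ipow_gens. Qed.

Lemma Ipow_expy n : Ipow n (y ^+ n).
Proof.
elim: n => [|n IHn]; first exact: Ipow_deg0.
by rewrite exprS -add1n; apply: IpowM => //; rewrite -gens_max; exact: Ipow_gens.
Qed.

Lemma meval_homog_decompY n (F : V) : F \is n.+1.-homog ->
  exists b : 'I_s -> R, (forall i, Ipow n (b i)) /\
    F.@[g] = \sum_i x i * b i + evalY1 F * y ^+ n.+1.
Proof.
move=> /homog_decompY [Fs [hFs eF]]; exists (fun i => (Fs i).@[g]); split.
  by move=> i; exists (Fs i).
rewrite {1}eF mevalD mevalZ rmorph_sum rmorphXn /= meval_Yv.
by congr (_ + _); apply: eq_bigr => i _; rewrite mevalM meval_Xv.
Qed.

Lemma IpowSW n a : Ipow n.+1 a -> Ipow n a.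
Proof.
move=> [F [hF <-]]; have [b [hb ->]] := meval_homog_decompY hF.
apply: IpowD; first by apply: Ipow_sum => i _; apply: IpowMl.
by rewrite exprS mulrCA; apply: IpowMl; apply: IpowMl; exact: Ipow_expy.
Qed.

Lemma IpowW n m a : (n <= m)%N -> Ipow m a -> Ipow n a.
Proof.
move=> /subnK <-; elim: (m - n)%N => [|k IHk] //= h.
by apply: IHk; apply: IpowSW; rewrite -addSn.
Qed.

Lemma JIpow0 n : JIpow n 0.
Proof.
exists (fun _ => 0); split=> [i|]; first exact: Ipow0.
by rewrite big1 // => i; rewrite mulr0.
Qed.

Lemma JIpowD n a b : JIpow n a -> JIpow n b -> JIpow n (a + b).
Proof.
move=> [u [hu ->]] [v [hv ->]]; exists (fun i => u i + v i); split.
  by move=> i; apply: IpowD.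
by rewrite -big_split; apply: eq_bigr => i _; rewrite mulrDr.
Qed.

Lemma JIpowMl n c a : JIpow n a -> JIpow n (c * a).
Proof.
move=> [u [hu ->]]; exists (fun i => c * u i); split.
  by move=> i; apply: IpowMl.
by rewrite mulr_sumr; apply: eq_bigr => i _; rewrite mulrCA.
Qed.

Lemma JIpowN n a : JIpow n a -> JIpow n (- a).
Proof. by move=> h; rewrite -mulN1r; apply: JIpowMl. Qed.

Lemma JIpow_sum n (T : Type) (r : seq T) (P : pred T) (f : T -> R) :
  (forall i, P i -> JIpow n (f i)) -> JIpow n (\sum_(i <- r | P i) f i).
Proof. by move=> h; apply: big_ind => //; [exact: JIpow0 | exact: JIpowD]. Qed.

Lemma JIpow_x n i b : Ipow n b -> JIpow n (x i * b).
Proof.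
move=> hb; exists (fun j => if j == i then b else 0); split.
  by move=> j; case: eqP => _ //; exact: Ipow0.
by rewrite (bigD1 i) //= eqxx big1 ?addr0 // => j /negbTE ->; exact: mulr0.
Qed.

Lemma JIpowM n m a b : JIpow n a -> Ipow m b -> JIpow (n + m) (a * b).
Proof.
move=> [u [hu ->]] hb; rewrite mulr_suml; apply: JIpow_sum => i _.
by rewrite -mulrA; apply: JIpow_x; apply: IpowM.
Qed.

Lemma JIpow_Ipow n a : JIpow n a -> Ipow n.+1 a.
Proof.
move=> [u [hu ->]]; apply: Ipow_sum => i _.
by rewrite -add1n; apply: IpowM => //; exact: Ipow_x.
Qed.

Lemma JIpow_of_expy k : JIpow k (y ^+ k.+1) -> forall a, Ipow k.+1 a -> JIpow k a.
Proof.
move=> hy a [F [hF <-]]; have [b [hb ->]] := meval_homog_decompY hF.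
by apply: JIpowD; [apply: JIpow_sum => i _; apply: JIpow_x | apply: JIpowMl].
Qed.

Lemma JIpow_expyS k : JIpow k (y ^+ k.+1) -> JIpow k.+1 (y ^+ k.+2).
Proof. by move=> h; have := JIpowM h (Ipow_gens ord_max); rewrite gens_max addn1 -exprSr. Qed.

Lemma JIpow_expyW k l : (k <= l)%N -> JIpow k (y ^+ k.+1) -> JIpow l (y ^+ l.+1).
Proof.
move=> /subnK <-; elim: (l - k)%N => [|d IHd] //= h.
by rewrite addSn; apply/JIpow_expyS/IHd.
Qed.

Lemma phiD (F G : V) : phi x y (F + G) = phi x y F + phi x y G.
Proof. exact: rmorphD. Qed.

Lemma phiM (F G : V) : phi x y (F * G) = phi x y F * phi x y G.
Proof. exact: rmorphM. Qed.

Lemma phi_sum (T : Type) (r : seq T) (P : pred T) (f : T -> V) :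
  phi x y (\sum_(i <- r | P i) f i) = \sum_(i <- r | P i) phi x y (f i).
Proof. exact: rmorph_sum. Qed.

Lemma phi_homog n (F : V) : F \is n.-homog -> phi x y F = (F.@[g])%:P * 'X^n.
Proof. exact: mmap_homog. Qed.

Lemma inQnE n (F : V) : inQn x y n F <-> F \is n.-homog /\ F.@[g] = 0.
Proof.
split=> -[hF e]; split=> //; last by rewrite /inQ (phi_homog hF) e mul0r.
move: e; rewrite /inQ (phi_homog hF) => /(congr1 (fun p : {poly R} => p`_n)).
by rewrite coefCM coefXn eqxx mulr1 coef0.
Qed.

Lemma inQD (F G : V) : inQ x y F -> inQ x y G -> inQ x y (F + G).
Proof. by rewrite /inQ phiD => -> ->; rewrite addr0. Qed.

Lemma inQMl (H F : V) : inQ x y F -> inQ x y (H * F).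
Proof. by rewrite /inQ phiM => ->; rewrite mulr0. Qed.

Lemma inQ_pihomog (F : V) d : inQ x y F -> inQn x y d (pihomog mdeg d F).
Proof.
move=> hF; apply/inQnE; split; first exact: pihomogP.
set k := maxn (mmeasure mdeg F) d.+1.
have hd : (d < k)%N by rewrite leq_maxr.
have eF := pihomog_partitionE (leq_maxl (mmeasure mdeg F) d.+1).
move: hF; rewrite /inQ {1}eF -/k phi_sum.
move=> /(congr1 (fun p : {poly R} => p`_d)); rewrite /= coef0 coef_sum.
rewrite (bigD1 (Ordinal hd)) //= big1 ?addr0.
  by rewrite (phi_homog (pihomogP _ _ _)) coefCM coefXn eqxx mulr1.
move=> e he; rewrite (phi_homog (pihomogP _ _ _)) coefCM coefXn.
rewrite (_ : (d == e) = false) ?mulr0 //.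
by apply/negbTE; apply: contra he => /eqP h; apply/eqP/val_inj.
Qed.

Lemma Qgen0 n : inQgen x y n 0.
Proof. by exists 0%N, (fun _ => 0), (fun _ => 0); split=> [[]|]; rewrite // big_ord0. Qed.

Lemma QgenD n F G : inQgen x y n F -> inQgen x y n G -> inQgen x y n (F + G).
Proof.
move=> [k1 [G1 [H1 [h1 ->]]]] [k2 [G2 [H2 [h2 ->]]]].
exists (k1 + k2)%N, (fun i => match split i with inl a => G1 a | inr b => G2 b end),
  (fun i => match split i with inl a => H1 a | inr b => H2 b end).
split; first by move=> i; case: (split i).
rewrite big_split_ord /=; congr (_ + _); apply: eq_bigr => i _.
  by rewrite (unsplitK (inl i)).
by rewrite (unsplitK (inr i)).
Qed.

Lemma QgenMl n H F : inQgen x y n F -> inQgen x y n (H * F).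
Proof.
move=> [k [G [H1 [h ->]]]]; exists k, G, (fun i => H * H1 i); split=> //.
by rewrite mulr_sumr; apply: eq_bigr => i _; rewrite mulrA.
Qed.

Lemma Qgen_sum n (T : Type) (r : seq T) (P : pred T) (f : T -> V) :
  (forall i, P i -> inQgen x y n (f i)) -> inQgen x y n (\sum_(i <- r | P i) f i).
Proof. by move=> h; apply: big_ind => //; [exact: Qgen0 | exact: QgenD]. Qed.

Lemma Qn_Qgen n d G : (d <= n)%N -> inQn x y d G -> inQgen x y n G.
Proof.
move=> hd hG; exists 1%N, (fun _ => G), (fun _ => 1); split; first by move=> _; exists d.
by rewrite big_ord1 mul1r.
Qed.

Lemma QgenW n m F : (n <= m)%N -> inQgen x y n F -> inQgen x y m F.
Proof.
move=> hnm [k [G [H [h ->]]]]; exists k, G, H; split=> // i.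
by have [d [hd hG]] := h i; exists d; split=> //; apply: leq_trans hnm.
Qed.

Lemma Qgen_inQ n F : inQgen x y n F -> inQ x y F.
Proof.
move=> [k [G [H [h ->]]]]; rewrite /inQ phi_sum big1 // => i _.
by rewrite phiM; have [d [_ [_ ->]]] := h i; rewrite mulr0.
Qed.

Lemma Qgen_sub n N : (forall d F, (d <= n)%N -> inQn x y d F -> inQgen x y N F) ->
  forall F, inQgen x y n F -> inQgen x y N F.
Proof.
move=> hQ F [k [G [H [h ->]]]]; apply: Qgen_sum => i _; apply: QgenMl.
by have [d [hd hG]] := h i; exact: hQ hG.
Qed.

Lemma inQ_Qgen N : (forall d F, inQn x y d F -> inQgen x y N F) -> Q_eq_gen x y N.
Proof.
move=> hQ F; split; last exact: Qgen_inQ.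
move=> hF; rewrite (pihomog_partitionE (leqnn (mmeasure mdeg F))).
by apply: Qgen_sum => d _; exact: hQ (inQ_pihomog d hF).
Qed.


Lemma Qn_evalY1_JIpow m d (G : V) : (d <= m.+1)%N -> inQn x y d G ->
  JIpow m (evalY1 G * y ^+ m.+1).
Proof.
case: d => [|e] hd /inQnE [hG h0].
  have -> : evalY1 G = 0 by rewrite /evalY1 homog0_meval // -(homog0_meval g hG) h0.
  by rewrite mul0r; exact: JIpow0.
have [b [hb eG]] := meval_homog_decompY hG.
have hJ : JIpow e (evalY1 G * y ^+ e.+1).
  have -> : evalY1 G * y ^+ e.+1 = - \sum_i x i * b i.
    by apply/eqP; rewrite -addr_eq0 addrC -eG h0.
  by apply/JIpowN/JIpow_sum => i _; exact: JIpow_x.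
have := JIpowM hJ (Ipow_expy (m - e)).
by rewrite -mulrA -exprD addSn subnKC.
Qed.

Lemma Qgen_evalY1_JIpow m (F : V) : F \is m.+2.-homog -> inQgen x y m.+1 F ->
  JIpow m (evalY1 F * y ^+ m.+1).
Proof.
pose e1 (j : 'I_s.+1) : R := if j == ord_max then 1 else 0.
have coef_e1 n (G : V) :
    G \is n.-homog -> evalY1 G = (mmap (@polyC R) (fun j => (e1 j)%:P * 'X) G)`_n.
  by move=> hG; rewrite (mmap_homog _ hG) coefCM coefXn eqxx mulr1.
move=> hF [k [G [H [h eF]]]]; rewrite (coef_e1 _ _ hF) eF rmorph_sum coef_sum mulr_suml.
apply: JIpow_sum => i _; have [d [hd hGi]] := h i; have [hGh _] := (inQnE _ _).1 hGi.
rewrite rmorphM /= (mmap_homog _ hGh) mulrA coefMXn ifN; last by rewrite -leqNgt; lia.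
by rewrite coefMC -mulrA; apply: JIpowMl; exact: Qn_evalY1_JIpow hd hGi.
Qed.

Lemma colon_lift k r : JIpow k (r * y ^+ k.+1) -> exists B : 'I_s -> V,
  (forall i, B i \is k.-homog) /\
  inQn x y k.+1 (r *: Y ^+ k.+1 - \sum_i X i * B i) /\
  evalY1 (r *: Y ^+ k.+1 - \sum_i X i * B i) = r.
Proof.
move=> [b [hb e]]; have [B hB] := fin_all_exists hb.
exists B; split=> [i|]; first by case: (hB i).
split.
  apply/inQnE; split.
    apply: rpredB; last by apply: sum_Xv_mul_homog => i; case: (hB i).
    by apply: dhomogZ; have := dhomogMn k.+1 (Yv_homog); rewrite mul1n.
  rewrite mevalB mevalZ rmorphXn /= meval_Yv e rmorph_sum /=; apply/eqP; rewrite subr_eq0.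
  by apply/eqP/eq_bigr => i _; rewrite mevalM meval_Xv; case: (hB i) => _ ->.
rewrite /evalY1 mevalB mevalZ rmorphXn /= -/(evalY1 Y) evalY1_Yv expr1n mulr1.
rewrite rmorph_sum /= big1 ?subr0 // => i _.
by rewrite mevalM -/(evalY1 (X i)) evalY1_Xv mul0r.
Qed.

Definition Jt t (a : R) := exists c : 'I_s -> R, a = \sum_(i < s | (i < t)%N) x i * c i.

Definition JtIpow t n (a : R) := exists b : 'I_s -> R,
  (forall i, Ipow n (b i)) /\ a = \sum_(i < s | (i < t)%N) x i * b i.

Lemma big_ltS_ext (t : 'I_s) (u : 'I_s -> R) v :
  \sum_(i < s | (i < t.+1)%N) x i * (if (i < t)%N then u i else if i == t then v else 0) =
  \sum_(i < s | (i < t)%N) x i * u i + x t * v.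
Proof. by rewrite big_ord_ltS ltnn eqxx; congr (_ + _); apply: eq_bigr => i ->. Qed.

Section GeneratedIdeal.
Variable I : R -> Prop.
Hypothesis I_gen : same_set I (ideal_gen g).

Lemma Ipow1P a : I a <-> Ipow 1 a.
Proof.
split=> [/I_gen [c [_ ->]]|[F [hF <-]]].
  by apply: Ipow_sum => j _; apply: IpowMl; exact: Ipow_gens.
apply/I_gen; have [b [hb ->]] := meval_homog_decompY (n := 0) hF.
exists (fun j => if unlift ord_max j is Some i then b i else evalY1 F); split=> [j|].
  by rewrite inE.
rewrite big_ord_lift_max unlift_none gens_max expr1; congr (_ + _).
by apply: eq_bigr => i _; rewrite liftK gens_lift mulrC.
Qed.

Lemma idealX_Ipow n a : idealX I n a <-> Ipow n a.
Proof.
elim: n a => [|n IHn] a; first by split=> // _; exact: Ipow_deg0.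
split=> [[k [u [v [hu [hv ->]]]]]|[F [hF <-]]].
  apply: Ipow_sum => i _; rewrite -add1n.
  by apply: IpowM; [apply/Ipow1P; exact: hu | apply/IHn; exact: hv].
have [b [hb ->]] := meval_homog_decompY hF.
exists s.+1, g, (fun j => if unlift ord_max j is Some i then b i else evalY1 F * y ^+ n).
split; first by move=> j; apply/Ipow1P; exact: Ipow_gens.
split.
  move=> j; apply/IHn; case: (unliftP ord_max j) => [i _|_] //.
  by apply: IpowMl; exact: Ipow_expy.
rewrite big_ord_lift_max unlift_none gens_max exprS mulrCA; congr (_ + _).
by apply: eq_bigr => i _; rewrite liftK gens_lift.
Qed.

Lemma idealM_JIpow n a : idealM (ideal_gen x) (idealX I n) a <-> JIpow n a.
Proof.
split=> [[k [u [v [hu [hv ->]]]]]|[b [hb ->]]].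
  apply: JIpow_sum => i _; have [c [_ ->]] := hu i; rewrite mulr_suml.
  apply: JIpow_sum => j _; rewrite [c j * x j]mulrC -mulrA.
  by apply: JIpow_x; apply: IpowMl; apply/idealX_Ipow; exact: hv.
exists s, x, b; split.
  move=> i; exists (fun j => (j == i)%:R); split=> [j|]; first by rewrite inE.
  by rewrite (bigD1 i) //= eqxx mul1r big1 ?addr0 // => j /negbTE ->; rewrite mul0r.
by split=> // i; apply/idealX_Ipow.
Qed.

(* Minimality of the generating family is used only here. *)
Lemma y_notin_J : minimal_generating g I -> ~ JIpow 0 y.
Proof.
move=> [_ hmin] [b [_ eb]]; apply: (hmin [set j | j != ord_max]).
  rewrite properT; apply/eqP => eS.
  by have := in_setT (@ord_max s); rewrite -eS inE eqxx.
move=> a; split=> [/I_gen [c [_ ->]]|[c [hc ->]]]; last first.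
  by apply/I_gen; exists c; split=> // j; rewrite inE.
exists (fun j => if unlift ord_max j is Some i then c (lift ord_max i) + c ord_max * b i else 0).
split; first by move=> j; rewrite inE negbK => /eqP ->; rewrite unlift_none.
rewrite !big_ord_lift_max unlift_none mul0r addr0 gens_max.
under eq_bigr do rewrite gens_lift.
under [RHS]eq_bigr do rewrite liftK gens_lift.
rewrite eb mulr_sumr -big_split /=; apply: eq_bigr => i _.
by rewrite mulrDl mulrCA [x i * _]mulrC.
Qed.

Definition Ghom (c : R) (j : nat) : nat -> R := fun m => if m == j then c else 0.

Lemma Gelt_Ghom c j : Ipow j c -> Gelt I (Ghom c j).
Proof.
move=> hc; split=> [m|]; last by exists j.+1 => m; rewrite /Ghom; case: eqP => // ->; rewrite ltnn.
by apply/idealX_Ipow; rewrite /Ghom; case: eqP => [->|_] //; exact: Ipow0.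
Qed.

Hypothesis G_reg : G_regular_seq I x s.-1.

(* In G(I) this reads x_t^* c^* = - sum_(i < t) x_i^* d_i^*, so by regularity
   c^* lies in (x_i^* : i < t). *)
Lemma initial_form_regular (t : 'I_s) j c (d : 'I_s -> R) : (t < s.-1)%N ->
  Ipow j c -> (forall i, Ipow j (d i)) ->
  Ipow j.+2 (x t * c + \sum_(i < s | (i < t)%N) x i * d i) ->
  exists f : 'I_s -> R, Ipow j.+1 (c - \sum_(i < s | (i < t)%N) x i * f i).
Proof.
move=> ht hc hd hsum.
have hGin : G_in_ideal I x t (Gmul (initial_form (x t)) (Ghom c j)).
  exists (fun i => Ghom (- d i) j); split; first by move=> i; apply/Gelt_Ghom/IpowN.
  move=> [|m]; apply/idealX_Ipow; rewrite Gmul_initial_formE;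
    under eq_bigr do rewrite Gmul_initial_formE.
    by rewrite sub0r big1 ?oppr0 //; exact: Ipow0.
  rewrite /Ghom; case: eqP => [->|_]; last first.
    by rewrite mulr0 big1 ?subr0; [exact: Ipow0 | move=> i _; rewrite mulr0].
  by under eq_bigr do rewrite mulrN; rewrite sumrN opprK.
have [e [_ he]] := G_reg.1 t ht _ (Gelt_Ghom hc) hGin.
exists (fun i => if j is j'.+1 then e i j' else 0).
move/idealX_Ipow: (he j); rewrite /Ghom eqxx; congr (Ipow _ (_ - _)).
by apply: eq_bigr => i _; rewrite Gmul_initial_formE; case: (j) => [|j']; rewrite ?mulr0.
Qed.

Section JtStep.
Variable t : 'I_s.
Hypothesis ht : (t < s.-1)%N.
Hypothesis Jt_cap_t : forall n a, Jt t a -> Ipow n.+1 a -> JtIpow t n a.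

Lemma JtIpow_sub_last j a (c : 'I_s -> R) :
  a = \sum_(i < s | (i < t.+1)%N) x i * c i -> Ipow j (c t) -> Ipow j.+1 a ->
  JtIpow t j (a - x t * c t).
Proof.
move=> ea hc ha; apply: Jt_cap_t; first by exists c; rewrite ea big_ord_ltS addrK.
by apply: IpowB ha _; rewrite -add1n; apply: IpowM hc; exact: Ipow_x.
Qed.

Lemma Jt_raise_last n a : Ipow n.+1 a -> Jt t.+1 a -> forall j, (j <= n)%N ->
  exists c : 'I_s -> R, a = \sum_(i < s | (i < t.+1)%N) x i * c i /\ Ipow j (c t).
Proof.
move=> ha [c0 ea0]; elim=> [_|j IHj hj]; first by exists c0; split=> //; exact: Ipow_deg0.
have [c [ea hc]] := IHj (ltnW hj).
have [c' [hc' ec']] := JtIpow_sub_last ea hc (IpowW (leqW hj) ha).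
have [f hf] : exists f : 'I_s -> R,
    Ipow j.+1 (c t - \sum_(i < s | (i < t)%N) x i * f i).
  by apply: initial_form_regular ht hc hc' _; rewrite -ec' addrC subrK; apply: IpowW ha.
exists (fun i : 'I_s => if (i < t)%N then c' i + x t * f i
                 else if i == t then c t - \sum_(k < s | (k < t)%N) x k * f k else 0).
split; last by rewrite ltnn eqxx.
rewrite big_ltS_ext; under eq_bigr do rewrite mulrDr mulrCA.
by rewrite big_split /= -mulr_sumr -ec' mulrBr addrACA subrK subrr addr0.
Qed.

Lemma Jt_cap_IpowS n a : Jt t.+1 a -> Ipow n.+1 a -> JtIpow t.+1 n a.
Proof.
move=> hJ ha; have [c [ea hc]] := Jt_raise_last ha hJ (leqnn n).
have [b [hb eb]] := JtIpow_sub_last ea hc ha.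
exists (fun i : 'I_s => if (i < t)%N then b i else if i == t then c t else 0); split.
  by move=> i; case: ifP => _ //; case: ifP => _ //; exact: Ipow0.
by rewrite big_ltS_ext -eb subrK.
Qed.

End JtStep.

(* The Valabrega-Valla condition for the partial sequences x_1, ..., x_t. *)
Lemma Jt_cap_Ipow t : (t <= s.-1)%N ->
  forall n a, Jt t a -> Ipow n.+1 a -> JtIpow t n a.
Proof.
elim: t => [_|t IHt ht] n a.
  move=> [c ->] _; exists (fun _ => 0); split=> [i|]; first exact: Ipow0.
  by rewrite !big_pred0 // => i; rewrite ltn0.
have hts : (t < s)%N by lia.
exact: (@Jt_cap_IpowS (Ordinal hts) ht (IHt (ltnW ht))).
Qed.

Hypothesis x_reg : regular_seq x.

Lemma syzygy_last_coeff m (t : 'I_s) (Ks : 'I_s -> V) :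
  (forall i, Ks i \is m.+1.-homog) ->
  \sum_(i < s | (i < t.+1)%N) x i * (Ks i).@[g] = 0 ->
  exists B : 'I_s -> V, (forall i, B i \is m.-homog) /\
    (Ks t).@[g] = \sum_(i < s | (i < t)%N) x i * (B i).@[g].
Proof.
move=> hKs; rewrite big_ord_ltS => hsum.
have hJ : Jt t (Ks t).@[g].
  have : ideal_gen_on [set j : 'I_s | (j < t)%N] x ((Ks t).@[g] * x t).
    exists (fun i : 'I_s => if (i < t)%N then - (Ks i).@[g] else 0); split.
      by move=> i; rewrite inE => /negbTE ->.
    transitivity (\sum_(i < s | (i < t)%N) - (Ks i).@[g] * x i).
      rewrite mulrC (eq_bigr (fun i => - (x i * (Ks i).@[g]))); last first.
        by move=> i _; rewrite mulNr mulrC.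
      by apply/eqP; rewrite sumrN -addr_eq0 addrC hsum.
    by rewrite big_mkcond; apply: eq_bigr => i _; case: ifP; rewrite ?mul0r.
  move=> /(x_reg.1 t) [c [hc ->]]; exists c; rewrite [RHS]big_mkcond.
  apply: eq_bigr => i _; case: ifP => [_|hi]; first by rewrite mulrC.
  by rewrite hc ?mul0r // inE hi.
have ht : (t <= s.-1)%N by have := ltn_ord t; lia.
have [b [hb eb]] := Jt_cap_Ipow ht hJ (ex_intro _ _ (conj (hKs t) erefl)).
have [B hB] := fin_all_exists hb.
exists B; split=> [i|]; first by case: (hB i).
by rewrite eb; apply: eq_bigr => i _; case: (hB i) => _ ->.
Qed.

Lemma syzygy_QgenS m (t : 'I_s) :
  (forall Ks : 'I_s -> V, (forall i, Ks i \is m.+1.-homog) ->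
     \sum_(i < s | (i < t)%N) x i * (Ks i).@[g] = 0 ->
     inQgen x y m.+1 (\sum_(i < s | (i < t)%N) X i * Ks i)) ->
  forall Ks : 'I_s -> V, (forall i, Ks i \is m.+1.-homog) ->
    \sum_(i < s | (i < t.+1)%N) x i * (Ks i).@[g] = 0 ->
    inQgen x y m.+1 (\sum_(i < s | (i < t.+1)%N) X i * Ks i).
Proof.
move=> IH Ks hKs hsum; have [B [hB eB]] := syzygy_last_coeff hKs hsum.
rewrite (big_ltS_koszul t X Ks B); apply: QgenD.
  apply: IH => [i|]; first exact: dhomogD (hKs i) (Xv_mul_homog _ (hB i)).
  move: hsum; rewrite (big_ltS_koszul t x (fun i => (Ks i).@[g]) (fun i => (B i).@[g])).
  rewrite eB subrr mulr0 addr0 => hsum'; rewrite -[RHS]hsum'.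
  by apply: eq_bigr => i _; rewrite mevalD mevalM meval_Xv.
apply/QgenMl/(Qn_Qgen (leqnn _))/inQnE; split.
  exact: rpredB (hKs t) (sum_Xv_mul_homog _ hB).
rewrite mevalB rmorph_sum /= eB; apply/eqP; rewrite subr_eq0; apply/eqP.
by apply: eq_bigr => j _; rewrite mevalM meval_Xv.
Qed.

Lemma syzygy_Qgen m t : (t <= s)%N -> forall Ks : 'I_s -> V,
  (forall i, Ks i \is m.+1.-homog) ->
  \sum_(i < s | (i < t)%N) x i * (Ks i).@[g] = 0 ->
  inQgen x y m.+1 (\sum_(i < s | (i < t)%N) X i * Ks i).
Proof.
elim: t => [_|t IHt ht] Ks hKs hsum; first by rewrite big_pred0 //; exact: Qgen0.
exact: (@syzygy_QgenS m (Ordinal ht) (IHt (ltnW ht))).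
Qed.

Lemma Qn_evalY1_eq0 m (K : V) : inQn x y m.+2 K -> evalY1 K = 0 -> inQgen x y m.+1 K.
Proof.
move=> /inQnE [hK h0] h1; have [Ks [hKs eK]] := homog_decompY hK.
have sum_all (T : nmodType) (f : 'I_s -> T) : \sum_i f i = \sum_(i < s | (i < s)%N) f i.
  by apply: eq_bigl => i; rewrite ltn_ord.
rewrite h1 scale0r addr0 in eK; rewrite eK sum_all.
apply: syzygy_Qgen (leqnn s) _ hKs _; rewrite -sum_all -[RHS]h0 eK rmorph_sum /=.
by apply: eq_bigr => i _; rewrite mevalM meval_Xv.
Qed.

Lemma Qn_colon_Qgen m (F : V) : inQn x y m.+2 F ->
  (JIpow m (evalY1 F * y ^+ m.+1) <-> inQgen x y m.+1 F).
Proof.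
move=> hF; split; last by apply: Qgen_evalY1_JIpow; case/inQnE: hF.
move=> /colon_lift [B [_ [hG eG]]].
set G := _ - _ in hG eG.
have [[hFh hF0] [hGh hG0]] := ((inQnE _ _).1 hF, (inQnE _ _).1 hG).
rewrite -[F](subrK (Y * G)); apply: QgenD; last by apply/QgenMl/(Qn_Qgen (leqnn _)).
apply: Qn_evalY1_eq0.
  apply/inQnE; split; first by apply: rpredB hFh _; have := dhomogM Yv_homog hGh; rewrite add1n.
  by rewrite mevalB mevalM hF0 hG0 mulr0 subrr.
by rewrite /evalY1 mevalB mevalM -!/(evalY1 _) evalY1_Yv mul1r eG subrr.
Qed.

Lemma Qn_Qgen_of_reduction r : JIpow r (y ^+ r.+1) ->
  forall d F, inQn x y d F -> inQgen x y r.+1 F.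
Proof.
move=> hy d; elim/ltn_ind: d => d IHd F hF.
case: (leqP d r.+1) => hdr; first exact: Qn_Qgen hF.
have [k ek] : exists k, d = k.+2 by exists d.-2; lia.
subst d; have hyk := JIpow_expyW (hdr : (r <= k)%N) hy.
have hQ := proj1 (Qn_colon_Qgen hF) (JIpowMl _ (JIpow_of_expy hyk (Ipow_expy _))).
by apply: (Qgen_sub _ hQ) => e G he; apply: IHd; lia.
Qed.

Lemma reduction_at_JIpow r :
  reduction_at (ideal_gen x) I r <-> JIpow r (y ^+ r.+1).
Proof.
split=> [hred|hy a].
  by apply/idealM_JIpow/(hred _).1/idealX_Ipow; exact: Ipow_expy.
split=> [/idealX_Ipow ha|/idealM_JIpow ha]; apply/idealM_JIpow || apply/idealX_Ipow.
  exact: JIpow_of_expy.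
exact: JIpow_Ipow.
Qed.

Lemma reduction_number_gt0 r : minimal_generating g I ->
  reduction_number (ideal_gen x) I r -> (0 < r)%N.
Proof.
move=> hmin; case: r => // -[_ [/reduction_at_JIpow + _]].
by rewrite expr1 => /(y_notin_J hmin).
Qed.

Lemma relation_type_of_reduction r (P : V) :
  JIpow r.+1 (y ^+ r.+2) -> ~ JIpow r (y ^+ r.+1) ->
  inQn x y r.+2 P -> evalY1 P = 1 -> relation_type x y r.+2.
Proof.
move=> hy hny hP eP; have hQ := inQ_Qgen (Qn_Qgen_of_reduction hy).
split=> //; split=> // M /andP [_]; rewrite ltnS => hM hQM.
apply/hny; rewrite -[y ^+ _]mul1r -[X in X * _]eP.
by apply/(Qn_colon_Qgen hP); apply: (QgenW hM); apply/(hQM _).1; exact: hP.2.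
Qed.

Lemma Q_decomposition r (P : V) : JIpow r.+1 (y ^+ r.+2) ->
  inQn x y r.+2 P -> evalY1 P = 1 -> forall G,
  inQ x y G <-> exists A B : V, inQgen x y r.+1 B /\ G = A * P + B.
Proof.
move=> hy hP eP G; split=> [|[A [B [hB ->]]]]; last exact: inQD (inQMl _ hP.2) (Qgen_inQ hB).
move=> /(inQ_Qgen (Qn_Qgen_of_reduction hy)) [k [Gs [H [h ->]]]].
pose modP (F : V) := exists A B : V, inQgen x y r.+1 B /\ F = A * P + B.
suff modP_Gs i : modP (Gs i).
  apply: (big_ind modP) => [|F1 F2 [A1 [B1 [h1 ->]]] [A2 [B2 [h2 ->]]]|i _].
  - by exists 0, 0; split; [exact: Qgen0 | rewrite mul0r addr0].
  - by exists (A1 + A2), (B1 + B2); split; [exact: QgenD | rewrite mulrDl addrACA].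
  have [A [B [hB ->]]] := modP_Gs i.
  by exists (H i * A), (H i * B); split; [exact: QgenMl | rewrite mulrDr mulrA].
have [d [hd hGi]] := h i.
case: (ltnP d r.+2) => hdr.
  by exists 0, (Gs i); split; [exact: Qn_Qgen hGi | rewrite mul0r add0r].
have {hd hdr} ed : d = r.+2 by apply/eqP; rewrite eqn_leq hd.
subst d; set c := evalY1 (Gs i).
exists c%:MP, (Gs i - c%:MP * P); split; last by rewrite addrC subrK.
have [[hGh hG0] [hPh hP0]] := ((inQnE _ _).1 hGi, (inQnE _ _).1 hP).
have hB : inQn x y r.+2 (Gs i - c%:MP * P).
  apply/inQnE; split; first by apply: rpredB hGh _; rewrite mul_mpolyC dhomogZ.
  by rewrite mevalB mevalM hG0 hP0 mulr0 subrr.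
apply/(Qn_colon_Qgen hB); rewrite /evalY1 mevalB mevalM mevalC -!/(evalY1 _) eP.
by rewrite mulr1 subrr mul0r; exact: JIpow0.
Qed.

End GeneratedIdeal.

End Rees.

Theorem theorem4p1 (R : comNzRingType) (s : nat) (x : 'I_s -> R) (y : R)
  (I : R -> Prop) :
  noetherian R -> local_ring R ->
  minimal_generating (gens x y) I ->
  regular_seq x ->
  G_regular_seq I x s.-1 ->
  let J := ideal_gen x in
  (forall n : nat, (2 <= n)%N ->
     (forall F : {mpoly R[s.+1]}, inQn x y n F ->
        colon (idealM J (idealX I n.-1)) (y ^+ n) (evalY1 F)) /\
     (forall r : R, colon (idealM J (idealX I n.-1)) (y ^+ n) r ->
        exists F : {mpoly R[s.+1]}, inQn x y n F /\
          colon (idealM J (idealX I n.-2)) (y ^+ n.-1) (evalY1 F - r)) /\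
     (forall F : {mpoly R[s.+1]}, inQn x y n F ->
        (colon (idealM J (idealX I n.-2)) (y ^+ n.-1) (evalY1 F) <->
         inQgen x y n.-1 F))) /\
  (forall r : nat, reduction_number J I r ->
     relation_type x y r.+1 /\
     exists Fs : 'I_s -> {mpoly R[s.+1]},
       (forall i, Fs i \is r.-homog) /\
       let P := Yv R s ^+ r.+1 - \sum_(i < s) Xv R i * Fs i in
       inQn x y r.+1 P /\
       forall G : {mpoly R[s.+1]},
         inQ x y G <-> exists A B : {mpoly R[s.+1]}, inQgen x y r B /\ G = A * P + B).
Proof.
move=> _ _ hmin x_reg G_reg J; have I_gen := hmin.1.
have colonP n b a : colon (idealM J (idealX I n)) b a <-> JIpow x y n (a * b).
  exact: idealM_JIpow I_gen n (a * b).
split=> [[|[|m]] // _|r hr].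
  split; [|split].
  - by move=> F hF; apply/colonP; exact: Qn_evalY1_JIpow (leqnn _) hF.
  - move=> a /colonP /colon_lift [B [_ [hP eP]]].
    by exists (a *: Yv R s ^+ m.+2 - \sum_i Xv R i * B i); split; last first;
      [apply/colonP; rewrite eP subrr mul0r; exact: JIpow0|].
  - by move=> F hF; rewrite colonP; exact: Qn_colon_Qgen.
case: r hr (reduction_number_gt0 I_gen hmin hr) => // r' [_ [hred hmin_r]] _.
have hy := (reduction_at_JIpow I_gen _).1 hred.
have hny : ~ JIpow x y r' (y ^+ r'.+1).
  by move/(reduction_at_JIpow I_gen); exact: hmin_r.
have hy1 : JIpow x y r'.+1 (1 * y ^+ r'.+2) by rewrite mul1r.
have [B [hB [hP eP]]] := colon_lift hy1; rewrite scale1r in hP eP.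
split; first exact: relation_type_of_reduction hy hny hP eP.
by exists B; split=> //; split=> //; exact: Q_decomposition.
Qed.
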